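(* Assume the MDP satisfies the low-rank assumption with parameter $d$. For any two policies $\pi^\theta,\pi^\beta$ and all $t\ge2$ (with $t\le H$), \[ \big\|(\mu_t^{\pi^\theta}\mathbf 1^\top)\circ\pi^\theta_t-(\mu_t^{\pi^\beta}\mathbf 1^\top)\circ\pi^\theta_t\big\|_{\mathrm{op}}\le\sqrt{dS^2A}\,\big\|d_{t-1}^{\pi^\beta}-d_{t-1}^{\pi^\theta}\big\|_{\mathrm{op}}. \]
   Context: MDP: finite state space $\mathcal S$ ($S=|\mathcal S|$), finite action space $\mathcal A$ ($A=|\mathcal A|$), horizon $H$, transitions $P_t(\cdot\mid s,a)$, initial distribution $\mu_1$. For a policy $\pi=\{\pi_t\}$: $s_1\sim\mu_1$, $a_t\sim\pi_t(\cdot\mid s_t)$, $s_{t+1}\sim P_t(\cdot\mid s_t,a_t)$; $\mu_t^\pi(s)=\Pr_\pi(s_t=s)$ (a vector in $\mathbb R^S$), $d_t^\pi(s,a)=\Pr_\pi(s_t=s,a_t=a)$ and $\pi_t$ (entries $\pi_t(a\mid s)$) are viewed as $S\times A$ matrices; $\mathbf 1\in\mathbb R^A$ is the all-ones vector; $\circ$ is the entrywise product; $\|\cdot\|_{\mathrm{op}}$ the spectral norm. Low-rank assumption with parameter $d$: with $d'=\lfloor d/2\rfloor$, for each $t$ either $P_t(s'\mid s,a)=\sum_{i=1}^{d'}u_{t,i}(s',s)w_{t,i}(a)$ for all $s',s,a$, or $P_t(s'\mid s,a)=\sum_{i=1}^{d'}u_{t,i}(s)w_{t,i}(s',a)$ for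 all $s',s,a$ (and each reward has rank at most $d'$). *)

From HB Require Import structures.
From mathcomp Require Import all_boot all_order all_algebra.
From mathcomp Require Import boolp classical_sets reals.
Set Implicit Arguments. Unset Strict Implicit. Unset Printing Implicit Defensive.
Import Order.TTheory GRing.Theory Num.Theory.
Local Open Scope ring_scope.
Local Open Scope classical_set_scope.

Section MDP.
Variables (R : realType) (S A : finType).

(* Transition kernels: [P t s a s'] = P_t(s' | s, a).
   Policies: [pi t s a] = pi_t(a | s).  Initial distribution [mu1 s]. *)

Definition is_distr (T : finType) (p : T -> R) :=
  (forall x, 0 <= p x) /\ \sum_x p x = 1.

Definition is_kernel (P : nat -> S -> A -> S -> R) :=
  forall t s a, is_distr (P t s a).

Definition is_policy (pi : nat -> S -> A -> R) :=
  forall t s, is_distr (pi t s).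

(* [mu_rec n] = mu_{n+1}: state-occupancy distribution at (1-based) time n+1. *)
Fixpoint mu_rec (P : nat -> S -> A -> S -> R) (mu1 : S -> R)
    (pi : nat -> S -> A -> R) (n : nat) : S -> R :=
  match n with
  | 0 => mu1
  | n'.+1 => fun s' =>
      \sum_s \sum_a mu_rec P mu1 pi n' s * pi n'.+1 s a * P n'.+1 s a s'
  end.

Definition occ_mu P mu1 pi (t : nat) : S -> R := mu_rec P mu1 pi t.-1.

Definition occ_d P mu1 pi (t : nat) : S -> A -> R :=
  fun s a => occ_mu P mu1 pi t s * pi t s a.

Definition opnorm (M : S -> A -> R) : R :=
  sup [set Num.sqrt (\sum_s (\sum_a M s a * x a) ^+ 2) |
        x in [set x : A -> R | \sum_a x a ^+ 2 <= 1]].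

Definition low_rank_at (d : nat) (P : nat -> S -> A -> S -> R) (t : nat) :=
  (exists (u : 'I_(d./2) -> S -> S -> R) (w : 'I_(d./2) -> A -> R),
      forall s' s a, P t s a s' = \sum_i u i s' s * w i a)
  \/
  (exists (u : 'I_(d./2) -> S -> R) (w : 'I_(d./2) -> S -> A -> R),
      forall s' s a, P t s a s' = \sum_i u i s * w i s' a).

End MDP.

(** The matrix on the left is [(fun s a => delta s * q s a)] with [delta] the
    difference of the two state occupancies at time [t] and [q] the stochastic
    matrix [pi^theta_t]; its spectral norm is at most [||delta||_1].  Since
    [delta] is the image under the stochastic kernel [P_(t-1)] of the
    difference [D] of the state-action occupancies at time [t-1], and
    stochastic kernels contract the [l1] norm, [||delta||_1 <= ||D||_1].
    Finally [||D||_1 <= |S| sqrt |A| ||D||_op] by testing [D] against sign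
    vectors, and [d >= 1] because a transition kernel cannot have rank [0]. *)

From HB Require Import structures.
From mathcomp Require Import all_boot all_order all_algebra.
From mathcomp Require Import boolp classical_sets reals.
From mathcomp Require Import ring.
Import Order.TTheory GRing.Theory Num.Theory.
Local Open Scope ring_scope.

Section Bounds.
Set Implicit Arguments.
Unset Strict Implicit.
Variable R : realType.

Lemma ler_sum_term (I : finType) (F : I -> R) i :
  (forall j, 0 <= F j) -> F i <= \sum_j F j.
Proof. by move=> F_ge0; rewrite (bigD1 i) //= lerDl sumr_ge0. Qed.

Lemma sqr_le_sqr_norm (y m : R) : `|y| <= m -> y ^+ 2 <= m ^+ 2.
Proof.
move=> y_le_m; rewrite -real_normK ?num_real // !expr2.
by apply: ler_pM => //; apply: le_trans y_le_m.
Qed.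

Lemma sqrt_sum_sqr_le_sum_norm (I : finType) (y : I -> R) :
  Num.sqrt (\sum_i y i ^+ 2) <= \sum_i `|y i|.
Proof.
have l1_ge0 : 0 <= \sum_i `|y i| by apply: sumr_ge0.
rewrite -(ger0_norm l1_ge0) -sqrtr_sqr ler_sqrt; last exact: sqr_ge0.
rewrite [leRHS]expr2 big_distrl /=; apply: ler_sum => i _.
rewrite -real_normK ?num_real // expr2; apply: ler_wpM2l => //.
by apply: ler_sum_term => j.
Qed.

Lemma norm_le1_of_sum_sqr_le1 (I : finType) (x : I -> R) i :
  \sum_j x j ^+ 2 <= 1 -> `|x i| <= 1.
Proof.
move=> x_unit; rewrite -sqrtr_sqr -sqrtr1 ler_sqrt //.
by apply: le_trans x_unit; apply: ler_sum_term => j; apply: sqr_ge0.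
Qed.

Lemma sum_mul_le1 (I : finType) (q x : I -> R) :
  is_distr q -> \sum_j x j ^+ 2 <= 1 -> `|\sum_j q j * x j| <= 1.
Proof.
move=> [q_ge0 q_sum1] x_unit; apply: le_trans (ler_norm_sum _ _ _) _.
rewrite -q_sum1; apply: ler_sum => j _.
rewrite normrM ger0_norm // -[leRHS]mulr1; apply: ler_wpM2l => //.
exact: norm_le1_of_sum_sqr_le1.
Qed.

Lemma sqrt_card_le_sqrt_mul (A : finType) (d : nat) :
  (A -> (0 < d)%N) ->
  Num.sqrt (#|A|%:R : R) <= Num.sqrt (d * #|A|)%:R.
Proof.
move=> d_gt0; rewrite ler_sqrt ?ler0n // ler_nat.
have [-> // | /card_gt0P [a _]] := posnP #|A|.
by rewrite leq_pmull // d_gt0.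
Qed.

Section SpectralNorm.
Variables S A : finType.
Implicit Types (M : S -> A -> R) (x : A -> R).

Lemma opnorm_le M (B : R) :
  (forall x, \sum_a x a ^+ 2 <= 1 ->
     Num.sqrt (\sum_s (\sum_a M s a * x a) ^+ 2) <= B) ->
  opnorm M <= B.
Proof.
move=> M_le_B; apply: ge_sup; last by move=> _ [x x_unit <-]; apply: M_le_B.
exists (Num.sqrt (\sum_s (\sum_a M s a * 0) ^+ 2)), (fun _ => 0) => //=.
by rewrite big1 // => a _; rewrite expr0n.
Qed.

Lemma opnorm_ge M x :
  \sum_a x a ^+ 2 <= 1 ->
  Num.sqrt (\sum_s (\sum_a M s a * x a) ^+ 2) <= opnorm M.
Proof.
move=> x_unit; apply: ub_le_sup; last by exists x.
exists (Num.sqrt (\sum_s (\sum_a `|M s a|) ^+ 2)) => _ [z z_unit <-].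
rewrite ler_sqrt; last by apply: sumr_ge0 => s _; apply: sqr_ge0.
apply: ler_sum => s _; apply: sqr_le_sqr_norm.
apply: le_trans (ler_norm_sum _ _ _) _; apply: ler_sum => a _.
rewrite normrM -[leRHS]mulr1; apply: ler_wpM2l => //.
exact: norm_le1_of_sum_sqr_le1.
Qed.

Lemma opnorm_ge0 M : 0 <= opnorm M.
Proof.
apply: le_trans (@opnorm_ge M (fun _ => 0) _); first exact: sqrtr_ge0.
by rewrite big1 // => a _; rewrite expr0n.
Qed.

Lemma norm_row_image_le_opnorm M x s :
  \sum_a x a ^+ 2 <= 1 -> `|\sum_a M s a * x a| <= opnorm M.
Proof.
move=> x_unit; apply: le_trans (opnorm_ge M x_unit).
rewrite -sqrtr_sqr ler_sqrt; last by apply: sumr_ge0 => ? _; apply: sqr_ge0.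
by apply: ler_sum_term => ?; apply: sqr_ge0.
Qed.

Lemma opnorm_scale_rows_le (delta : S -> R) (q : S -> A -> R) :
  (forall s, is_distr (q s)) ->
  opnorm (fun s a => delta s * q s a) <= \sum_s `|delta s|.
Proof.
move=> q_distr; apply: opnorm_le => x x_unit.
apply: le_trans (sqrt_sum_sqr_le_sum_norm delta); rewrite ler_sqrt; last first.
  by apply: sumr_ge0 => s _; apply: sqr_ge0.
apply: ler_sum => s _; rewrite -(real_normK (num_real (delta s))).
apply: sqr_le_sqr_norm; under eq_bigr do rewrite -mulrA.
rewrite -big_distrr normrM -[leRHS]mulr1 ler_wpM2l //.
exact: sum_mul_le1.
Qed.

(* The test vector is [sign (M s a) / sqrt |A|], of Euclidean norm at most 1. *)
Lemma sum_norm_row_le_opnorm M s :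
  \sum_a `|M s a| <= Num.sqrt #|A|%:R * opnorm M.
Proof.
have [A0 | A_gt0] := posnP #|A|.
  rewrite big1 ?mulr_ge0 ?sqrtr_ge0 ?opnorm_ge0 // => a.
  by have := card0_eq A0 a; rewrite inE.
pose c : R := Num.sqrt #|A|%:R; have c_gt0 : 0 < c by rewrite sqrtr_gt0 ltr0n.
pose x a := Num.sg (M s a) / c.
have x_unit : \sum_a x a ^+ 2 <= 1.
  apply: (@le_trans _ _ (\sum_(a : A) c^-1 ^+ 2)).
    apply: ler_sum => a _; rewrite /x expr_div_n exprVn -[leRHS]mul1r.
    by rewrite ler_wpM2r ?invr_ge0 ?sqr_ge0 // sqr_sg lern1 leq_b1.
  rewrite sumr_const -[X in _ *+ X]/#|A| -mulr_natr exprVn sqr_sqrtr ?ler0n //.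
  by rewrite mulVf // pnatr_eq0 -lt0n.
have row_image : \sum_a M s a * x a = (\sum_a `|M s a|) / c.
  by rewrite big_distrl; apply: eq_bigr => a _ /=; rewrite /x normrEsg; ring.
have l1_ge0 : 0 <= (\sum_a `|M s a|) / c by rewrite divr_ge0 ?sumr_ge0 ?ltW.
rewrite -/c -ler_pdivrMl // mulrC -(ger0_norm l1_ge0) -row_image.
exact: norm_row_image_le_opnorm.
Qed.

Lemma sum_norm_le_opnorm (d : nat) M :
  (S -> A -> (0 < d)%N) ->
  \sum_s \sum_a `|M s a| <= Num.sqrt (d * #|S| ^ 2 * #|A|)%:R * opnorm M.
Proof.
move=> d_gt0.
have row_le s : \sum_a `|M s a| <= Num.sqrt (d * #|A|)%:R * opnorm M.
  apply: le_trans (sum_norm_row_le_opnorm M s) _.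
  by rewrite ler_wpM2r ?opnorm_ge0 ?(sqrt_card_le_sqrt_mul (d_gt0 s)).
apply: le_trans (ler_sum _ (fun s _ => row_le s)) _.
rewrite sumr_const mulnAC (natrM _ (d * #|A|)) sqrtrM ?ler0n // natrX sqrtr_sqr.
by rewrite ger0_norm ?ler0n // mulrAC mulr_natr.
Qed.

End SpectralNorm.

Section Occupancy.
Variables S A : finType.

Definition push (K : S -> A -> S -> R) (M : S -> A -> R) : S -> R :=
  fun s' => \sum_s \sum_a M s a * K s a s'.

Lemma pushB K (M1 M2 : S -> A -> R) s' :
  push K (fun s a => M1 s a - M2 s a) s' = push K M1 s' - push K M2 s'.
Proof.
rewrite /push -sumrB; apply: eq_bigr => s _.
by rewrite -sumrB; apply: eq_bigr => a _; rewrite mulrBl.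
Qed.

Lemma sum_norm_push_le K (M : S -> A -> R) :
  (forall s a, is_distr (K s a)) ->
  \sum_s' `|push K M s'| <= \sum_s \sum_a `|M s a|.
Proof.
move=> K_distr.
have push_le s' : `|push K M s'| <= \sum_s \sum_a `|M s a| * K s a s'.
  apply: le_trans (ler_norm_sum _ _ _) _; apply: ler_sum => s _.
  apply: le_trans (ler_norm_sum _ _ _) _; apply: ler_sum => a _.
  by rewrite normrM (ger0_norm (proj1 (K_distr s a) s')).
apply: le_trans (ler_sum _ (fun s' _ => push_le s')) _.
rewrite exchange_big /=; apply: ler_sum => s _.
rewrite exchange_big /=; apply: ler_sum => a _.
by rewrite -big_distrr /= (proj2 (K_distr s a)) mulr1.
Qed.

Lemma occ_mu_succ P mu1 pi t :
  (0 < t)%N -> occ_mu P mu1 pi t.+1 = push (P t) (occ_d P mu1 pi t).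
Proof. by case: t. Qed.

Lemma low_rank_dim_gt0 (d : nat) (P : nat -> S -> A -> S -> R) t s a :
  is_distr (P t s a) -> low_rank_at d P t -> (0 < d)%N.
Proof.
move=> [_ P_sum1]; case: d => // low_rank.
suff P_zero s' : P t s a s' = 0.
  by move: P_sum1; rewrite big1 // => /esym/eqP; rewrite oner_eq0.
by case: low_rank => [[u [w ->]] | [u [w ->]]]; rewrite big_ord0.
Qed.

End Occupancy.

End Bounds.

Theorem lemma7 (R : realType) (S A : finType) (H d : nat)
    (P : nat -> S -> A -> S -> R) (mu1 : S -> R)
    (pi_theta pi_beta : nat -> S -> A -> R) (t : nat) :
  is_kernel P -> is_distr mu1 ->
  (forall k, (1 <= k <= H)%N -> low_rank_at d P k) ->
  is_policy pi_theta -> is_policy pi_beta ->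
  (2 <= t <= H)%N ->
  opnorm (fun s a =>
      occ_mu P mu1 pi_theta t s * pi_theta t s a
      - occ_mu P mu1 pi_beta t s * pi_theta t s a)
  <= Num.sqrt ((d * #|S| ^ 2 * #|A|)%:R)
     * opnorm (fun s a =>
         occ_d P mu1 pi_beta (t.-1) s a - occ_d P mu1 pi_theta (t.-1) s a).
Proof.
move=> P_kernel _ P_low_rank theta_policy _.
case: t => [|[|n]] // /andP [_ n_le_H].
have d_gt0 (s : S) (a : A) : (0 < d)%N.
  apply: (low_rank_dim_gt0 (P_kernel n.+1 s a)).
  by apply: P_low_rank; rewrite /= ltnW.
pose delta s := occ_mu P mu1 pi_theta n.+2 s - occ_mu P mu1 pi_beta n.+2 s.
have -> : (fun s a => occ_mu P mu1 pi_theta n.+2 s * pi_theta n.+2 s a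
                      - occ_mu P mu1 pi_beta n.+2 s * pi_theta n.+2 s a)
          = (fun s a => delta s * pi_theta n.+2 s a).
  by apply/funext => s; apply/funext => a; rewrite mulrBl.
apply: le_trans (opnorm_scale_rows_le delta (theta_policy n.+2)) _.
have delta_push s : delta s = push (P n.+1)
    (fun s a => occ_d P mu1 pi_theta n.+1 s a - occ_d P mu1 pi_beta n.+1 s a) s.
  by rewrite pushB -!occ_mu_succ.
under eq_bigr do rewrite delta_push.
apply: le_trans (sum_norm_push_le _ (P_kernel n.+1)) _.
under eq_bigr do under eq_bigr do rewrite distrC.
exact: sum_norm_le_opnorm.
Qed.
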